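(* Let $1<p<\infty$, let $E$ be a separable Banach space, and let $\mu_1,\mu_2$ be two $\sigma$-additive $\sigma$-finite separable measures on the same measurable space $\Omega$ that are mutually absolutely continuous. Let $G$ be a countable amenable group and $\{\alpha_g\}_{g\in G}$ a group of invertible measurable maps of $\Omega$ preserving the (common) class of null sets, acting metrically freely. For $i=1,2$ let $D_i=L^p_{\mu_i}(\Omega,E)$, let $A_i=L^\infty_{\mu_1}(\Omega,L(E))\ (=L^\infty_{\mu_2}(\Omega,L(E)))$ act on $D_i$ by multiplication, let $T^i_g$ be the isometries $(T^i_gf)(x)=\rho^i_g(x)^{1/p}f(\alpha_g^{-1}(x))$ of $D_i$, and let $B(A_i,T^i_g)$ be the closed subalgebra of $L(D_i)$ generated by $A_i$ and $\{T^i_g\}$. Then $B(A_1,T^1_g)$ and $B(A_2,T^2_g)$ are isomorphic as Banach algebras, via the isomorphism determined by the natural identification $A_1\cong A_2$ and $T^1_g\mapsto T^2_g$; i.e. for every finite $F$ and $a_g\in A_1$, $\|\sum_{g\in F}a_gT^1_g\|_{L(D_1)}=\|\sum_{g\in F}a_gT^2_g\|_{L(D_2)}$.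
   Context: $\rho^i_g$ is the Radon–Nikodym derivative of $\Delta\mapsto\mu_i(\alpha_g^{-1}(\Delta))$ with respect to $\mu_i$; $\alpha_{gh}=\alpha_g\circ\alpha_h$, $\alpha_e=\mathrm{id}$. $G$ acts metrically freely if for every finite $\{g_1,\dots,g_k\}\subset G$ and measurable $\Delta$ with $\mu_1(\Delta)>0$ there is measurable $\Delta'\subset\Delta$, $\mu_1(\Delta')>0$, with $\mu_1(\alpha_{g_i}(\Delta')\cap\alpha_{g_j}(\Delta'))=0$ for $i\neq j$ (equivalently for $\mu_2$, since the null sets coincide). *)

From HB Require Import structures.
From mathcomp Require Import all_boot all_order all_algebra.
From mathcomp Require Import all_classical all_reals all_analysis.
Set Implicit Arguments. Unset Strict Implicit. Unset Printing Implicit Defensive.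
Import Order.TTheory GRing.Theory Num.Theory.
Import numFieldNormedType.Exports.
Local Open Scope classical_set_scope.
Local Open Scope ring_scope.

Section Defs.
Context {R : realType}.

Definition separable_space (E : normedModType R) : Prop :=
  exists u : nat -> E, closure (range u) = setT.

(** Borel measurability of a Banach-space-valued function
    (for separable E this is strong measurability, Pettis). *)
Definition borel_measurable {d} {T : measurableType d} {E : normedModType R}
    (f : T -> E) : Prop :=
  forall U : set E, open U -> measurable (f @^-1` U).

Definition Lpnorm {d} {T : measurableType d} {E : normedModType R}
    (mu : {measure set T -> \bar R}) (p : R) (f : T -> E) : \bar R :=
  Lnorm mu p%:E (fun x => (`|f x|)%:E).

Definition in_Lp {d} {T : measurableType d} {E : normedModType R}
    (mu : {measure set T -> \bar R}) (p : R) (f : T -> E) : Prop :=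
  borel_measurable f /\ (Lpnorm mu p f < +oo)%E.

Definition in_Linf_op {d} {T : measurableType d} {E : normedModType R}
    (mu : {measure set T -> \bar R}) (a : T -> E -> E) : Prop :=
  [/\ (forall x (c : R) (u v : E), a x (c *: u + v) = c *: a x u + a x v),
      (forall e : E, borel_measurable (fun x => a x e)) &
      exists M : R, {ae mu, forall x, forall e : E, `|a x e| <= M * `|e|}].

(** Separable measure: the measure algebra (sets of finite measure with the
    distance mu(A symmetric-difference B)) has a countable dense subset. *)
Definition separable_measure {d} {T : measurableType d}
    (mu : {measure set T -> \bar R}) : Prop :=
  exists S : nat -> set T, (forall n, measurable (S n)) /\
    forall A, measurable A -> (mu A < +oo)%E -> forall e : R, 0 < e ->
      exists n, (mu ((A `\` S n) `|` (S n `\` A)) < e%:E)%E.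

Definition bounded_fun_on (G : Type) (f : G -> R) : Prop :=
  exists M : R, forall g, `|f g| <= M.

Definition amenable (G : groupType) : Prop :=
  exists m : (G -> R) -> R,
    [/\ (forall (f h : G -> R) (c : R), bounded_fun_on f -> bounded_fun_on h ->
           m (fun x => c * f x + h x) = c * m f + m h),
        (forall f : G -> R, bounded_fun_on f -> (forall x, 0 <= f x) -> 0 <= m f),
        m (fun _ => 1) = 1 &
        (forall (f : G -> R) (g : G), bounded_fun_on f ->
           m (fun x => f (monoid.mul g x)) = m f)].

Definition is_RN_deriv {d} {T : measurableType d}
    (mu : {measure set T -> \bar R}) (alpha : T -> T) (rho : T -> R) : Prop :=
  [/\ measurable_fun setT rho, (forall x, 0 <= rho x) &
      forall D, measurable D -> mu (alpha @^-1` D) = (\int[mu]_(x in D) (rho x)%:E)%E].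

Definition metrically_free {d} {T : measurableType d} (G : groupType)
    (mu : {measure set T -> \bar R}) (alpha : G -> T -> T) : Prop :=
  forall (s : seq G) (D : set T), measurable D -> (0 < mu D)%E ->
    exists D' : set T, [/\ measurable D', D' `<=` D, (0 < mu D')%E &
      forall g h, g \in s -> h \in s -> g != h ->
        mu ((alpha g @` D') `&` (alpha h @` D')) = 0%E].

Definition cross_op {d} {T : measurableType d} {E : normedModType R}
    (G : groupType) (p : R) (alpha : G -> T -> T) (rho : G -> T -> R)
    (s : seq G) (a : G -> T -> E -> E) (f : T -> E) : T -> E :=
  fun x => \sum_(g <- s) a g x ((rho g x) `^ p^-1 *: f (alpha (monoid.inv g) x)).

Definition Lp_opnorm {d} {T : measurableType d} {E : normedModType R}
    (mu : {measure set T -> \bar R}) (p : R) (S : (T -> E) -> (T -> E)) : \bar R :=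
  ereal_sup [set Lpnorm mu p (S f) | f in [set f | in_Lp mu p f /\ (Lpnorm mu p f <= 1)%E]].

End Defs.

(* Let h be a strictly positive finite version of d(mu1)/d(mu2). Multiplication
   by h^(1/p) is an isometry from L^p_mu1(Omega, E) onto L^p_mu2(Omega, E) that
   commutes with the multiplication operators, and the chain rule for
   Radon-Nikodym derivatives, rho2_g * (h o alpha_g^-1) = h * rho1_g mu2-a.e.,
   shows that it also intertwines T^1_g with T^2_g. Hence it conjugates
   sum a_g T^1_g to sum a_g T^2_g, and the two operator norms agree (each
   inequality comes from one of the two directions). This spatial argument does
   not use amenability, metric freeness, or the separability of the measures. *)

From HB Require Import structures.
From mathcomp Require Import all_boot all_order all_algebra.
From mathcomp Require Import all_classical all_reals all_analysis.
From mathcomp Require Import measurable_realfun.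
Set Implicit Arguments. Unset Strict Implicit. Unset Printing Implicit Defensive.
Import Order.TTheory GRing.Theory Num.Theory.
Import numFieldNormedType.Exports.
Local Open Scope classical_set_scope.
Local Open Scope ring_scope.

Section borel_scale.
Context (R : realType) (E : normedModType R).

Lemma scale_preimage_open_ball (U : set E) (c : R) (v : E) : open U -> U (c *: v) ->
  exists2 e, 0 < e & forall c' v', ball c e c' -> ball v e v' -> U (c' *: v').
Proof.
move=> oU Ucv.
have : nbhs (c, v) ((fun z : R^o * E => z.1 *: z.2) @^-1` U).
  by apply: (@scale_continuous R E (c, v)); exact: open_nbhs_nbhs.
move=> [[P Q] /= [/nbhs_ballP[e1 e10 e1P] /nbhs_ballP[e2 e20 e2Q]] PQ].
exists (Num.min e1 e2) => [|c' v' cc' vv']; first by rewrite lt_min e10.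
apply: (PQ (c', v')); split.
  by apply: e1P; apply: le_ball cc'; rewrite ge_min lexx.
by apply: e2Q; apply: le_ball vv'; rewrite ge_min lexx orbT.
Qed.

Variables (u : nat -> E) (U : set E).
Hypotheses (du : closure (range u) = setT) (oU : open U).

Let r (m : nat) : R := m.+1%:R^-1.

Definition scale_rect_in m n (q : rat) :=
  forall c v, ball (ratr q : R) (r m) c -> ball (u n) (r m) v -> U (c *: v).

Lemma scale_preimage_cover c v : U (c *: v) -> exists m n q,
  [/\ scale_rect_in m n q, ball (ratr q : R) (r m) c & ball (u n) (r m) v].
Proof.
move=> /(scale_preimage_open_ball oU)[e e0 eU].
have [m _ me] := near_infty_natSinv_lt (PosNum (divr_gt0 e0 (ltr0Sn R 1))).
have rm0 : 0 < r m by rewrite invr_gt0.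
have [a [ca [q _ qa]]] := dense_rat (ex_intro _ c (ballxx c rm0)) (ball_open c (r m)).
have : closure (range u) v by rewrite du.
move=> /(_ _ (nbhsx_ballx v _ rm0))[w [[n _ nw] vw]].
rewrite -{}qa in ca; rewrite -{}nw in vw.
exists m, n, q; split; [|exact: ball_sym|exact: ball_sym] => c' v' qc' nv'.
have e2 : r m + r m < e.
  by have /= := me m (leqnn m); rewrite ltr_pdivlMr// -/(r m) mulrDr mulr1.
by apply: eU; [apply: le_ball (ball_triangle ca qc')|apply: le_ball (ball_triangle vw nv')];
  rewrite ltW.
Qed.

Lemma measurable_scale_preimage d (T : measurableType d) (phi : T -> R) (f : T -> E) :
  measurable_fun setT phi -> borel_measurable f ->
  measurable ((fun x => phi x *: f x) @^-1` U).
Proof.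
move=> mphi mf.
have -> : (fun x => phi x *: f x) @^-1` U = \bigcup_m \bigcup_n \bigcup_q
    ([set _ | scale_rect_in m n q] `&`
     (phi @^-1` ball (ratr q : R) (r m) `&` f @^-1` ball (u n) (r m))).
  apply/seteqP; split => x /=.
    move=> /scale_preimage_cover[m [n [q [? ? ?]]]].
    by exists m => //; exists n => //; exists q.
  by move=> [m _ [n _ [q _ [/= good [? ?]]]]]; exact: good.
apply: bigcupT_measurable => m; apply: bigcupT_measurable => n.
apply: bigcupT_measurable_rat => q.
have [good|bad] := pselect (scale_rect_in m n q); last by rewrite (propF bad) set0I.
rewrite (propT good) setTI; apply: measurableI; last exact/mf/ball_open.
rewrite -[X in measurable X]setTI; apply: mphi => //.
exact: (open_measurable (ball_open (ratr q : R) (r m))).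
Qed.
End borel_scale.

Lemma borel_measurable_scale (R : realType) (E : normedModType R) d (T : measurableType d)
    (phi : T -> R) (f : T -> E) :
  separable_space E -> measurable_fun setT phi -> borel_measurable f ->
  borel_measurable (fun x => phi x *: f x).
Proof. by move=> [u du] mphi mf U oU; exact: (measurable_scale_preimage du oU mphi mf). Qed.

Local Open Scope ereal_scope.

(* The integrands |S f|^p in [Lp_opnorm] need not be measurable, so these facts
   are stated for arbitrary nonnegative functions, whose integral is the supremum
   over simple minorants. *)
Section ge0_integral_arbitrary.
Context d (T : measurableType d) (R : realType) (mu : {measure set T -> \bar R}).
Implicit Types f g : T -> \bar R.
Import HBNNSimple.

Lemma ge0_le_integralT f g : (forall x, 0 <= f x) -> (forall x, f x <= g x) ->
  \int[mu]_x f x <= \int[mu]_x g x.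
Proof.
move=> f0 fg; have g0 x : 0 <= g x by exact: le_trans (fg x).
rewrite !ge0_integralTE//; apply: ereal_sup_le => _ [h /= hf <-].
by exists h => //= x; exact: le_trans (fg x).
Qed.

Lemma ge0_integralT_le_minorant f (c : \bar R) : (forall x, 0 <= f x) ->
  (forall g, measurable_fun setT g -> (forall x, 0 <= g x) ->
     (forall x, g x <= f x) -> \int[mu]_x g x <= c) ->
  \int[mu]_x f x <= c.
Proof.
move=> f0 fc; rewrite ge0_integralTE//; apply: ge_ereal_sup => _ [h /= hf <-].
rewrite -integralT_nnsfun; apply: fc => //; first exact/measurable_EFinP.
by move=> x; rewrite lee_fin.
Qed.

Lemma ae_eq_ge0_integralT f g : (forall x, 0 <= f x) -> (forall x, 0 <= g x) ->
  {ae mu, forall x, f x = g x} -> \int[mu]_x f x = \int[mu]_x g x.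
Proof.
suff le_fg f' g' : (forall x, 0 <= f' x) -> (forall x, 0 <= g' x) ->
    {ae mu, forall x, f' x = g' x} -> \int[mu]_x f' x <= \int[mu]_x g' x.
  move=> f0 g0 fg; apply/le_anti; rewrite !le_fg//.
  by apply: filterS fg.
move=> f0 g0 [N [mN N0 fgN]]; apply: ge0_integralT_le_minorant => // h mh h0 hf.
pose hN x := h x * (\1_(~` N) x)%:E.
have mhN : measurable_fun setT hN.
  by apply: emeasurable_funM => //; apply/measurable_EFinP/measurable_indic/measurableC.
rewrite (ae_eq_integral hN)//; last first.
  exists N; split => // x /= hNx; apply: contra_notP hNx => Nx _.
  by rewrite /hN indicE mem_set// mule1.
apply: ge0_le_integralT => x; rewrite /hN indicE.
  by case: (x \in _); rewrite ?mule1 ?mule0.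
have [/set_mem Nx|_] := boolP (x \in ~` N); last by rewrite mule0.
by rewrite mule1 (le_trans (hf x))// (contrapT (fun Nx' => Nx (fgN x Nx'))).
Qed.
End ge0_integral_arbitrary.

Section integral_density.
Context d (T : measurableType d) (R : realType).
Variables (mu nu : {measure set T -> \bar R}) (g : T -> R).
Hypotheses (g0 : forall x, (0 <= g x)%R) (mg : measurable_fun setT g).
Hypothesis nuE : forall A, measurable A -> nu A = \int[mu]_(x in A) (g x)%:E.
Variables (D : set T) (mD : measurable D).
Import HBNNSimple.

Let mgE : measurable_fun D (EFin \o g).
Proof. exact/measurable_EFinP/measurable_funTS. Qed.

Lemma integral_density_indic A : measurable A ->
  \int[mu]_(x in D) ((\1_A x)%:E * (g x)%:E) = nu (A `&` D).
Proof.
move=> mA; rewrite nuE; last exact: measurableI.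
rewrite [RHS]integral_mkcond [LHS]integral_mkcond; apply: eq_integral => x _.
by rewrite !patchE indicE in_setI; case: (x \in A); case: (x \in D); rewrite ?mul1e ?mul0e.
Qed.

Lemma integral_density_nnsfun (h : {nnsfun T >-> R}) :
  \int[mu]_(x in D) ((h x)%:E * (g x)%:E) = \int[nu]_(x in D) (h x)%:E.
Proof.
pose hr r x := (r * \1_(h @^-1` [set r]) x)%:E.
have hE x : (h x)%:E = \sum_(r \in range h) hr r x by rewrite {1}fimfunE -fsumEFin.
have hr0 r x : 0 <= hr r x by exact: nnfun_muleindic_ge0.
have mhr r : measurable_fun D (hr r).
  by apply/measurable_EFinP/measurable_funM => //; exact: measurable_funTS.
under eq_integral do rewrite hE ge0_mule_fsuml//.
under [RHS]eq_integral do rewrite hE.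
rewrite ge0_integral_fsum//; last 2 first.
- by move=> r; apply: emeasurable_funM.
- by move=> r x _; rewrite mule_ge0// lee_fin.
rewrite ge0_integral_fsum//; apply: eq_fsbigr => r /[!inE] -[y _ <-].
under eq_integral do rewrite /hr EFinM -muleA.
rewrite ge0_integralZl ?lee_fin//; last 2 first.
- by apply: emeasurable_funM => //; exact/measurable_EFinP/measurable_funTS.
- by move=> x _; rewrite mule_ge0 ?lee_fin.
rewrite integralZl_indic_nnsfun//; congr (_ * _).
have mhy : measurable (h @^-1` [set h y]) by exact: measurable_funPTI.
exact: etrans (integral_density_indic mhy) (esym (integral_indic nu mD mhy)).
Qed.

Lemma integral_density (f : T -> \bar R) : (forall x, D x -> 0 <= f x) ->
  measurable_fun D f ->
  \int[mu]_(x in D) (f x * (g x)%:E) = \int[nu]_(x in D) f x.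
Proof.
move=> f0 mf; pose h := nnsfun_approx mD mf.
have h_cvg x : D x -> (h n x)%:E @[n --> \oo] --> f x by exact: cvg_nnsfun_approx.
have h_nd x : nondecreasing_seq (fun n => (h n x)%:E).
  by move=> m n mn; rewrite lee_fin; exact/lefP/nd_nnsfun_approx.
have mh n : measurable_fun D (fun x => (h n x)%:E).
  exact/measurable_EFinP/measurable_funTS.
rewrite (eq_integral (fun x => limn (fun n => (h n x)%:E * (g x)%:E))); last first.
  by move=> x /[!inE] Dx; apply/esym/cvg_lim => //; apply: cvgeZr => //; exact: h_cvg.
rewrite [RHS](eq_integral (fun x => limn (fun n => (h n x)%:E))); last first.
  by move=> x /[!inE] Dx; apply/esym/cvg_lim => //; exact: h_cvg.
rewrite !monotone_convergence//.
- by congr (limn _); apply/funext => n; exact: integral_density_nnsfun.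
- by move=> n x _; rewrite lee_fin.
- by move=> n; exact: emeasurable_funM.
- by move=> n x _; rewrite mule_ge0 ?lee_fin.
- by move=> x _ m n mn; rewrite lee_wpmul2r ?lee_fin//; exact: h_nd.
Qed.
End integral_density.

Lemma sigma_finite_integral_ae_eq d (T : measurableType d) (R : realType)
    (mu : {measure set T -> \bar R}) (u v : T -> R) :
  sigma_finite setT mu -> measurable_fun setT u -> measurable_fun setT v ->
  (forall A, measurable A -> \int[mu]_(x in A) (u x)%:E = \int[mu]_(x in A) (v x)%:E) ->
  {ae mu, forall x, u x = v x}.
Proof.
move=> /sigma_finiteP[F [FT ndF mF]] mu_ mv uv.
pose D m := F m `&` [set x | `|u x| <= m%:R]%R `&` [set x | `|v x| <= m%:R]%R.
have mD m : measurable (D m).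
  have mnorm (w : T -> R) : measurable_fun setT w -> measurable [set x | `|w x| <= m%:R]%R.
    move=> mw; rewrite -[X in measurable X]setTI.
    by apply: measurable_fun_le => //; exact: measurableT_comp.
  by apply: measurableI; [apply: measurableI; [exact: (mF m).1|]|]; exact: mnorm.
have Dfin m : mu (D m) < +oo.
  by rewrite (le_lt_trans _ (mF m).2)// le_measure// ?inE//; [case: (mF m)|move=> x [[]]].
have aeD m : ae_eq mu (D m) (EFin \o u) (EFin \o v).
  apply: integral_ae_eq => //.
  - apply: measurable_bounded_integrable => //; first exact: measurable_funS mu_.
    by exists m%:R; split => // M mM x [[_ ux] _]; rewrite /= (le_trans ux)// ltW.
  - by apply/measurable_EFinP; exact: measurable_funS mv.
  - by move=> A _ mA; exact: uv.
apply: (negligibleS _ (negligible_bigcup aeD)) => x /= uvx.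
have : [set: T] x by [].
rewrite FT => -[i _ Fix].
pose m := maxn i (maxn (Num.truncn `|u x|).+1 (Num.truncn `|v x|).+1).
have trunc_le (w : R) : (`|w| <= (Num.truncn `|w|).+1%:R)%R by exact/ltW/truncnS_gt.
exists m => //= Dx; apply: uvx; suff /Dx[] : D m x by [].
split; [split|].
- by have /subsetPset := ndF i m (leq_maxl _ _); apply.
- by rewrite /= (le_trans (trunc_le _))// ler_nat /m leq_max leq_max leqnn orbT.
- by rewrite /= (le_trans (trunc_le _))// ler_nat /m leq_max leq_max leqnn !orbT.
Qed.

Section equivalent_measures_density.
Context d (T : measurableType d) (R : realType).
Variables mu1 mu2 : {measure set T -> \bar R}.
Hypotheses (sf1 : sigma_finite setT mu1) (sf2 : sigma_finite setT mu2).
Hypothesis null12 : forall A, measurable A -> (mu1 A = 0 <-> mu2 A = 0).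

(* [mu2] under another name, to carry the [sigma_finite_measure] structure
   that [radon_nikodym_sigma_finite] requires. *)
Definition mu2_sigma_finite : set T -> \bar R := mu2.
HB.instance Definition _ := Measure.on mu2_sigma_finite.
HB.instance Definition _ := Measure_isSigmaFinite.Build _ _ _ mu2_sigma_finite sf2.

Lemma sigma_finite_radon_nikodym : exists H : T -> \bar R,
  [/\ forall x, 0 <= H x, measurable_fun setT H &
      forall A, measurable A -> mu1 A = \int[mu2]_(x in A) H x].
Proof.
(* glue the densities of mu1 restricted to the disjoint pieces [E k] *)
have [F FT mF] := sf1.
pose E := seqDU F.
have mE k : measurable (E k).
  apply: measurableD; first exact: (mF k).1.
  by apply: bigsetU_measurable => i _; exact: (mF i).1.
have E_fin k : mu1 (E k) < +oo.
  by rewrite (le_lt_trans _ (mF k).2)// le_measure// ?inE//; [exact: (mF k).1|exact: subDsetl].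
have rn k : exists f : T -> \bar R, [/\ forall x, 0 <= f x, forall x, f x \is a fin_num,
    mu2_sigma_finite.-integrable setT f &
    forall A, measurable A -> mfrestr (mE k) (E_fin k) A = \int[mu2_sigma_finite]_(x in A) f x].
  apply: radon_nikodym_sigma_finite => N N0 A mA AN.
  rewrite /= /mfrestr /mrestr; apply/null12; first exact: measurableI.
  apply/eqP; rewrite -measure_le0 -(N0 A mA AN) le_measure// ?inE//; exact: measurableI.
have [f /all_and4[f0 _ fint fE]] := choice rn.
have mf k : measurable_fun setT (f k) by case/integrableP: (fint k).
exists (fun x => \sum_(k <oo) ((\1_(E k) x)%:E * f k x)); split.
- by move=> x; apply: nneseries_ge0 => k _; rewrite mule_ge0 ?lee_fin.
- apply: ge0_emeasurable_sum; first by move=> k x _ _; rewrite mule_ge0 ?lee_fin.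
  by move=> k _; apply: emeasurable_funM => //; exact/measurable_EFinP/measurable_indic.
move=> A mA; rewrite integral_nneseries//; last 2 first.
- move=> k; apply: emeasurable_funM; last exact: measurable_funTS.
  exact/measurable_EFinP/measurable_indic.
- by move=> k x _; rewrite mule_ge0 ?lee_fin.
transitivity (\sum_(k <oo) mu1 (A `&` E k)).
  rewrite -measure_semi_bigcup.
  - by rewrite -setI_bigcupr /E -seqDU_bigcup_eq -FT setIT.
  - by move=> k; exact: measurableI.
  - exact/trivIset_setIl/trivIset_seqDU.
  - by apply: bigcupT_measurable => k; exact: measurableI.
apply: eq_eseriesr => k _.
transitivity (\int[mu2]_(x in A) (f k \_ (E k)) x); last first.
  by apply: eq_integral => x _; rewrite epatch_indic /= muleC.
rewrite -integral_mkcondr -[RHS]/(\int[mu2_sigma_finite]_(x in _) _) -fE; last exact: measurableI.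
by rewrite /mfrestr /mrestr -setIA setIid.
Qed.

Lemma density_infty_null (H : T -> \bar R) : measurable_fun setT H ->
  (forall A, measurable A -> mu1 A = \int[mu2]_(x in A) H x) ->
  mu2 (H @^-1` [set +oo]) = 0.
Proof.
move=> mH HE; set I := H @^-1` [set +oo].
have [F FT mF] := sf1.
have mIF k : measurable (I `&` F k).
  by apply: measurableI; [rewrite -[I]setTI; exact: mH|exact: (mF k).1].
apply/eqP; rewrite -measure_le0 -[I]setIT FT setI_bigcupr.
apply: (le_trans (@measure_sigma_subadditive _ _ _ mu2 _ _ mIF _ _)) => //.
  exact: bigcupT_measurable.
rewrite eseries0// => k _ _.
have : mu1 (I `&` F k) < +oo.
  by rewrite (le_lt_trans _ (mF k).2)// le_measure// ?inE//; exact: (mF k).1.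
rewrite HE// (eq_integral (cst +oo)); last by move=> x /[!inE] -[].
rewrite integral_cst//; have [->//|] := eqVneq (mu2 (I `&` F k)) 0.
by rewrite -measure_gt0 => /gt0_mulye ->.
Qed.

Lemma equivalent_measures_pos_density : exists h : T -> R,
  [/\ forall x, (0 < h x)%R, measurable_fun setT h &
      forall A, measurable A -> mu1 A = \int[mu2]_(x in A) (h x)%:E].
Proof.
have [H [H0 mH HE]] := sigma_finite_radon_nikodym.
pose Z := H @^-1` [set 0]; pose I := H @^-1` [set +oo].
have mZ : measurable Z by rewrite -[Z]setTI; exact: mH.
have mI : measurable I by rewrite -[I]setTI; exact: mH.
have Z0 : mu2 Z = 0 by apply/null12 => //; rewrite HE// integral0_eq.
have I0 : mu2 I = 0 by exact: density_infty_null.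
(* H is 0 or +oo only on the mu2-null set [Z `|` I]; replace it by 1 there *)
pose h x := (fine (H x) + \1_(Z `|` I) x)%R.
exists h; split.
- move=> x; rewrite /h indicE; have [_|] := boolP (x \in Z `|` I).
    by rewrite ltr_pwDr// fine_ge0.
  rewrite in_setU negb_or addr0 => /andP[xZ xI].
  have HxZ : H x != 0 by apply: contraNneq xZ => Hx; rewrite inE; exact: Hx.
  have HxI : H x != +oo by apply: contraNneq xI => Hx; rewrite inE; exact: Hx.
  by rewrite fine_gt0// lt0e HxZ H0 ltey HxI.
- apply: measurable_funD; last exact/measurable_indic/measurableU.
  by apply: measurableT_comp => //; exact: fine_measurable.
- move=> A mA; rewrite HE//; apply: ae_eq_integral => //.
  + exact: measurable_funTS.
  + apply/measurable_EFinP/measurable_funTS/measurable_funD.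
      by apply: measurableT_comp => //; exact: fine_measurable.
    exact/measurable_indic/measurableU.
  + exists (Z `|` I); split; first exact: measurableU.
      apply/eqP; rewrite -measure_le0 (le_trans (measureU2 mu2 mZ mI))//.
      by rewrite [leLHS](_ : _ = mu2 Z + mu2 I :> \bar R)// Z0 I0 adde0.
    move=> x /= /not_implyP[_]; apply: contra_notP => /not_orP[xZ xI].
    rewrite /h indicE memNset ?addr0; last by move=> [].
    by rewrite fineK// ge0_fin_numE// ltey; apply/eqP.
Qed.
End equivalent_measures_density.

Section positive_density.
Context d (T : measurableType d) (R : realType).
Variables (mu1 mu2 : {measure set T -> \bar R}) (h : T -> R).
Hypotheses (h0 : forall x, (0 < h x)%R) (mh : measurable_fun setT h).
Hypothesis hE : forall A, measurable A -> mu1 A = \int[mu2]_(x in A) (h x)%:E.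

Let h_ge0 x : (0 <= h x)%R. Proof. exact: ltW. Qed.

Lemma ge0_integral_pos_density (G : T -> \bar R) : (forall x, 0 <= G x) ->
  \int[mu2]_x (G x * (h x)%:E) = \int[mu1]_x G x.
Proof.
move=> G0; apply/le_anti/andP; split.
- apply: ge0_integralT_le_minorant => [x|t mt t0 tG]; first by rewrite mule_ge0 ?lee_fin.
  pose th x := t x * (h x `^ (-1))%:E.
  have hV x : (h x `^ (-1) * h x = 1)%R by rewrite powR_inv1// mulVf ?gt_eqF.
  have mth : measurable_fun setT th.
    apply: emeasurable_funM => //; apply/measurable_EFinP.
    exact: measurableT_comp (measurable_powR _) mh.
  have th0 x : 0 <= th x by rewrite mule_ge0 ?lee_fin ?powR_ge0.
  rewrite (eq_integral (fun x => th x * (h x)%:E)); last first.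
    by move=> x _; rewrite -muleA -EFinM hV mule1.
  rewrite (integral_density h_ge0 mh hE)//; apply: ge0_le_integralT => // x.
  apply: le_trans (lee_wpmul2r _ (tG x)) _; first by rewrite lee_fin powR_ge0.
  by rewrite -muleA -EFinM mulrC hV mule1.
- apply: ge0_integralT_le_minorant => // t mt t0 tG.
  rewrite -(integral_density h_ge0 mh hE)//; apply: ge0_le_integralT => x.
    by rewrite mule_ge0 ?lee_fin.
  by rewrite lee_wpmul2r ?lee_fin.
Qed.
End positive_density.

Section RN_deriv_density.
Context d (T : measurableType d) (R : realType) (G : groupType).
Variables (mu1 mu2 : {measure set T -> \bar R}) (h : T -> R).
Hypotheses (h0 : forall x, (0 < h x)%R) (mh : measurable_fun setT h).
Hypothesis hE : forall A, measurable A -> mu1 A = \int[mu2]_(x in A) (h x)%:E.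
Hypothesis sf2 : sigma_finite setT mu2.
Variables (alpha : G -> T -> T) (rho1 rho2 : G -> T -> R).
Hypotheses (alpha_mul : forall g k, alpha (monoid.mul g k) = alpha g \o alpha k)
  (alpha_one : alpha monoid.one = id) (malpha : forall g, measurable_fun setT (alpha g)).
Hypotheses (rho1E : forall g, is_RN_deriv mu1 (alpha g) (rho1 g))
  (rho2E : forall g, is_RN_deriv mu2 (alpha g) (rho2 g)).

Lemma alphaK g : cancel (alpha g) (alpha (monoid.inv g)).
Proof.
move=> x; rewrite -[alpha _ (alpha g x)]/((alpha (monoid.inv g) \o alpha g) x).
by rewrite -alpha_mul mulVg alpha_one.
Qed.

Lemma RN_deriv_density_ae g :
  {ae mu2, forall x, (rho2 g x * h (alpha (monoid.inv g) x) = h x * rho1 g x)%R}.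
Proof.
have [mrho1 rho1_ge0 rho1_int] := rho1E g.
have [mrho2 rho2_ge0 rho2_int] := rho2E g.
have h_ge0 x : (0 <= h x)%R by exact: ltW.
have mhV : measurable_fun setT (fun x => h (alpha (monoid.inv g) x)).
  exact: measurableT_comp mh (malpha _).
have mpre A : measurable A -> measurable (alpha g @^-1` A).
  by move=> mA; rewrite -[X in measurable X]setTI; exact: malpha.
apply: sigma_finite_integral_ae_eq => //; [exact: measurable_funM..|] => A mA.
under eq_integral do rewrite EFinM muleC.
under [RHS]eq_integral do rewrite EFinM muleC.
have rho2_push B : measurable B ->
    pushforward mu2 (alpha g) B = \int[mu2]_(x in B) (rho2 g x)%:E.
  exact: rho2_int.
rewrite (integral_density rho2_ge0 mrho2 rho2_push)//; last 2 first.
- by move=> x _; rewrite lee_fin.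
- exact/measurable_EFinP/measurable_funTS.
rewrite (integral_density h_ge0 mh hE)//; last 2 first.
- by move=> x _; rewrite lee_fin.
- exact/measurable_EFinP/measurable_funTS.
rewrite -rho1_int// hE; last exact: mpre.
rewrite -[LHS]/(\int[pushforward mu2 (alpha g)]_(x in A) _) ge0_integral_pushforward//.
- by apply: eq_integral => x _; rewrite /= alphaK.
- exact/measurable_EFinP/measurable_funTS.
- by move=> y _; rewrite lee_fin.
Qed.
End RN_deriv_density.

Local Close Scope ereal_scope.

Lemma linear_scalable (R : pzRingType) (U V : lmodType R) (b : U -> V) :
  (forall c u v, b (c *: u + v) = c *: b u + b v) -> scalable b.
Proof.
move=> bD c w; have b0 : b 0 = 0.
  have := bD 1 0 0; rewrite scaler0 addr0 scale1r => /esym/eqP.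
  by rewrite -subr_eq0 addrK => /eqP.
by have := bD c w 0; rewrite b0 !addr0.
Qed.

Section Lp_density.
Context (R : realType) (p : R) (E : normedModType R) d (T : measurableType d).
Variables (mu1 mu2 : {measure set T -> \bar R}) (h : T -> R).
Hypotheses (p0 : 0 < p) (h0 : forall x, 0 < h x) (mh : measurable_fun setT h).
Hypothesis hE : forall A, measurable A -> mu1 A = (\int[mu2]_(x in A) (h x)%:E)%E.

Let phi x := h x `^ p^-1.

Lemma Lpnorm_density_scale (F1 F2 : T -> E) : {ae mu2, forall x, F2 x = phi x *: F1 x} ->
  Lpnorm mu2 p F2 = Lpnorm mu1 p F1.
Proof.
move=> F21; rewrite /Lpnorm unlock /=; congr (_ `^ _)%E.
rewrite -(ge0_integral_pos_density h0 mh hE); last by move=> x; rewrite lee_fin powR_ge0.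
apply: ae_eq_ge0_integralT => [x|x|]; rewrite ?mule_ge0 ?lee_fin ?powR_ge0 ?ltW//.
apply: filterS F21 => x ->; rewrite -EFinM !normr_id normrZ ger0_norm ?powR_ge0//.
by rewrite powRM ?powR_ge0// -powRrM mulVf ?gt_eqF// powRr1 ?ltW// mulrC.
Qed.

Variables (G : groupType) (alpha : G -> T -> T) (rho1 rho2 : G -> T -> R).
Hypotheses (alpha_mul : forall g k, alpha (monoid.mul g k) = alpha g \o alpha k)
  (alpha_one : alpha monoid.one = id) (malpha : forall g, measurable_fun setT (alpha g)).
Hypotheses (rho1E : forall g, is_RN_deriv mu1 (alpha g) (rho1 g))
  (rho2E : forall g, is_RN_deriv mu2 (alpha g) (rho2 g)).
Hypothesis sf2 : sigma_finite setT mu2.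
Variables (s : seq G) (a : G -> T -> E -> E).
Hypothesis a_lin : forall g, g \in s -> forall x c u v, a g x (c *: u + v) = c *: a g x u + a g x v.

Lemma cross_op_density_scale (f : T -> E) : {ae mu2, forall x,
  cross_op p alpha rho2 s a (fun y => phi y *: f y) x = phi x *: cross_op p alpha rho1 s a f x}.
Proof.
have := ae_foralln (fun n =>
  RN_deriv_density_ae h0 mh hE sf2 alpha_mul alpha_one malpha rho1E rho2E (nth monoid.one s n)).
apply: filterS => x rhoE; rewrite /cross_op scaler_sumr; apply: eq_big_seq => g gs.
have [_ rho1_ge0 _] := rho1E g; have [_ rho2_ge0 _] := rho2E g.
rewrite scalerA.
have -> : rho2 g x `^ p^-1 * phi (alpha (monoid.inv g) x) = phi x * rho1 g x `^ p^-1.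
  rewrite /phi -!powRM ?rho1_ge0 ?rho2_ge0 ?(ltW (h0 _))//; congr (_ `^ _).
  by rewrite -(nth_index monoid.one gs); exact: rhoE.
by rewrite -scalerA (linear_scalable (a_lin gs x)).
Qed.

Lemma Lp_opnorm_cross_op_le : separable_space E ->
  (Lp_opnorm mu1 p (cross_op p alpha rho1 s a) <= Lp_opnorm mu2 p (cross_op p alpha rho2 s a))%E.
Proof.
move=> sepE; apply: ge_ereal_sup => _ [f [[mf f_fin] f1] <-].
have phi_f : Lpnorm mu2 p (fun x => phi x *: f x) = Lpnorm mu1 p f.
  exact/Lpnorm_density_scale/aeW.
apply: ereal_sup_ubound; exists (fun x => phi x *: f x); last first.
  exact/Lpnorm_density_scale/cross_op_density_scale.
split; [split|]; rewrite ?phi_f//.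
by apply: borel_measurable_scale => //; exact: measurableT_comp (measurable_powR _) mh.
Qed.
End Lp_density.

Theorem mainTheorem11 (R : realType) (p : R) (E : completeNormedModType R)
    (d : measure_display) (Omega : measurableType d)
    (mu1 mu2 : {measure set Omega -> \bar R})
    (G : groupType) (alpha : G -> Omega -> Omega) (rho1 rho2 : G -> Omega -> R) :
  1 < p ->
  separable_space E ->
  sigma_finite setT mu1 -> sigma_finite setT mu2 ->
  separable_measure mu1 -> separable_measure mu2 ->
  (forall A, measurable A -> (mu1 A = 0%E <-> mu2 A = 0%E)) ->
  countable [set: G] -> amenable (R := R) G ->
  (forall g h, alpha (monoid.mul g h) = alpha g \o alpha h) -> alpha monoid.one = id ->
  (forall g, measurable_fun setT (alpha g)) ->
  (forall g A, measurable A -> mu1 A = 0%E -> mu1 (alpha g @^-1` A) = 0%E) ->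
  metrically_free mu1 alpha ->
  (forall g, is_RN_deriv mu1 (alpha g) (rho1 g)) ->
  (forall g, is_RN_deriv mu2 (alpha g) (rho2 g)) ->
  forall (s : seq G) (a : G -> Omega -> E -> E),
    uniq s -> (forall g, g \in s -> in_Linf_op mu1 (a g)) ->
    Lp_opnorm mu1 p (cross_op p alpha rho1 s a) =
    Lp_opnorm mu2 p (cross_op p alpha rho2 s a).
Proof.
move=> p1 sepE sf1 sf2 _ _ null12 _ _ alpha_mul alpha_one malpha _ _ rho1E rho2E s a _ a_Linf.
have p0 : 0 < p by exact: lt_trans p1.
have a_lin g : g \in s -> forall x c u v, a g x (c *: u + v) = c *: a g x u + a g x v.
  by move=> /a_Linf[].
have null21 A (mA : measurable A) : mu2 A = 0%E <-> mu1 A = 0%E := iff_sym (null12 A mA).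
have [h12 [h12_gt0 mh12 h12E]] := equivalent_measures_pos_density sf1 sf2 null12.
have [h21 [h21_gt0 mh21 h21E]] := equivalent_measures_pos_density sf2 sf1 null21.
apply/le_anti/andP; split.
- exact: (Lp_opnorm_cross_op_le p0 h12_gt0 mh12 h12E
    alpha_mul alpha_one malpha rho1E rho2E sf2 a_lin sepE).
- exact: (Lp_opnorm_cross_op_le p0 h21_gt0 mh21 h21E
    alpha_mul alpha_one malpha rho2E rho1E sf1 a_lin sepE).
Qed.
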